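(* Let $k\ge1$ and let $H\le\mathrm{Aut}(X^* )$ be generated by $r_0=\sigma(\mathrm{id},\mathrm{id})$, $r_i=(r_{i-1},\mathrm{id})$ for $1\le i\le k$, $b_0=(r_k,b_1)$, $b_1=(r_k,b_2)$, $b_2=(\mathrm{id},b_0)$. Then $H$ is a regular branch group over its commutator subgroup $H'$.
   Context: Let $X=\{0,1\}$, $X^*$ the rooted binary tree of finite words, $G=\mathrm{Aut}(X^* )$. Sections: $g(wv)=g(w)g_w(v)$. Wreath recursion: $g=\sigma^{\varepsilon}(g_0,g_1)$ means $g(xw)=\sigma^\varepsilon(x)g_x(w)$ for $x\in X$, with $\sigma$ the swap of $0,1$. For $g\in G$ and $x\in X$, $\delta_x(g)\in G$ is the automorphism acting as $g$ on the subtree below $x$ (i.e. $xv\mapsto xg(v)$) and trivially elsewhere. An infinite subgroup $H\le G$ is regular branch over $K\le H$ if $K$ is normal of finite index in $H$ and $\delta_x(k)\in K$ for all $k\in K$, $x\in X$. *)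

(* Words over X = {0,1} are lists of booleans: 0 = false, 1 = true.
   Tree automorphisms act on the left as functions  list bool -> list bool. *)
From Stdlib Require Import List.
Import ListNotations.

Definition word := list bool.
Definition tfun := word -> word.

Definition comp (f g : tfun) : tfun := fun w => f (g w).
Definition idt : tfun := fun w => w.

Definition is_inv (f g : tfun) : Prop :=
  (forall w, g (f w) = w) /\ (forall w, f (g w) = w).

Inductive gen (S : tfun -> Prop) : tfun -> Prop :=
| gen_base f : S f -> gen S f
| gen_id : gen S idt
| gen_mul f g : gen S f -> gen S g -> gen S (comp f g)
| gen_inv f g : gen S f -> is_inv f g -> gen S g
| gen_ext f g : gen S f -> (forall w, f w = g w) -> gen S g.

Definition commutators (H : tfun -> Prop) (c : tfun) : Prop :=
  exists h1 h2 i1 i2, H h1 /\ H h2 /\ is_inv h1 i1 /\ is_inv h2 i2 /\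
    c = comp i1 (comp i2 (comp h1 h2)).

Definition derived (H : tfun -> Prop) : tfun -> Prop := gen (commutators H).

Definition delta (x : bool) (g : tfun) : tfun :=
  fun w => match w with
           | y :: v => if Bool.eqb y x then y :: g v else w
           | [] => []
           end.

Definition infinite_set (H : tfun -> Prop) : Prop :=
  ~ exists s : list tfun, forall h, H h -> exists f, In f s /\ forall w, f w = h w.

Definition subset_of (K H : tfun -> Prop) : Prop := forall k, K k -> H k.

Definition normal_in (K H : tfun -> Prop) : Prop :=
  forall h hi k, H h -> is_inv h hi -> K k -> K (comp hi (comp k h)).

(* finitely many left cosets t K (t in H) cover H *)
Definition finite_index (K H : tfun -> Prop) : Prop :=
  exists ts : list tfun, (forall t, In t ts -> H t) /\
    forall h, H h -> exists t k, In t ts /\ K k /\ forall w, h w = comp t k w.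

Definition regular_branch_over (H K : tfun -> Prop) : Prop :=
  infinite_set H /\ subset_of K H /\ normal_in K H /\ finite_index K H /\
  forall k x, K k -> K (delta x k).

(* Generators.  r_0 = sigma(id,id), r_i = (r_{i-1}, id). *)
Fixpoint r (i : nat) (w : word) : word :=
  match i, w with
  | _, [] => []
  | O, x :: v => negb x :: v
  | S j, false :: v => false :: r j v
  | S j, true :: v => true :: v
  end.

Inductive B3 := B0 | B1 | B2.

(* b_0 = (r_k, b_1), b_1 = (r_k, b_2), b_2 = (id, b_0). *)
Fixpoint b (k : nat) (j : B3) (w : word) {struct w} : word :=
  match w with
  | [] => []
  | x :: v =>
    match j, x with
    | B0, false => false :: r k v
    | B0, true => true :: b k B1 v
    | B1, false => false :: r k v
    | B1, true => true :: b k B2 v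
    | B2, false => false :: v
    | B2, true => true :: b k B0 v
    end
  end.

Definition gens (k : nat) (f : tfun) : Prop :=
  (exists i, i <= k /\ f = r i) \/ f = b k B0 \/ f = b k B1 \/ f = b k B2.

Definition Hgrp (k : nat) : tfun -> Prop := gen (gens k).

From Stdlib Require Import List Lia Arith FunctionalExtensionality FinFun.
Import ListNotations.

(* Every generator s of H lifts to an element (s, a) of H with a an involution,
   and r_0, ..., r_(k-1), b_0 even lift to (s, id).  Commuting such a lift with
   the lift of another generator t gives ([s,t], id) in H'.  Among the remaining
   generators r_k, b_1, b_2 all pairs commute except r_k and b_1, and
   [r_k, b_1] = [r_k, b_0].  The set of c with (c, id) in H' is a group stable
   under conjugation by generators (conjugate by their lifts), so it contains
   all of H'; conjugating by r_0 moves (c, id) to (id, c).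
   Since H is generated by finitely many involutions, H/H' is a finite
   elementary abelian 2-group, and H is infinite because the elements
   delta_0^n (delta_1 [r_0, r_1]) of H' are pairwise distinct. *)

Ltac fext := apply functional_extensionality; intro.

Definition involution (f : tfun) : Prop := forall w, f (f w) = w.

Lemma involution_is_inv f : involution f -> is_inv f f.
Proof. intros Hf; split; exact Hf. Qed.

(* Agrees with the commutator f^-1 g^-1 f g when f and g are involutions. *)
Definition comm (f g : tfun) : tfun := comp f (comp g (comp f g)).

Lemma comm_is_inv f g : involution f -> involution g -> is_inv (comm f g) (comm g f).
Proof.
  intros Hf Hg; split; intros w; unfold comm, comp.
  - now rewrite Hf, Hg, Hf, Hg.
  - now rewrite Hg, Hf, Hg, Hf.
Qed.

Lemma comm_commuting f g :
  comp f g = comp g f -> involution f -> involution g -> comm f g = idt.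
Proof.
  intros E Hf Hg; fext; unfold comm, comp, idt.
  pose proof (equal_f E) as E'; unfold comp in E'.
  now rewrite E', Hf, Hg.
Qed.

Lemma is_inv_unique f g g' : is_inv f g -> is_inv f g' -> g = g'.
Proof. intros [A B] [C D]; fext. rewrite <- (D x) at 1. apply A. Qed.

Definition ev (l : list tfun) : tfun := fold_right comp idt l.

Lemma ev_app l1 l2 : ev (l1 ++ l2) = comp (ev l1) (ev l2).
Proof. induction l1 as [|f l1 IH]; simpl; [reflexivity | now rewrite IH]. Qed.

Lemma ev_rev_cons f l : ev (rev (f :: l)) = comp (ev (rev l)) f.
Proof. simpl; rewrite ev_app; reflexivity. Qed.

Lemma infinite_of_injective (H : tfun -> Prop) (e : nat -> tfun) :
  (forall n, H (e n)) -> Injective e -> infinite_set H.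
Proof.
  intros He Hinj [s Hs].
  pose (l := map e (seq 0 (S (length s)))).
  assert (ND : NoDup l) by (apply Injective_map_NoDup; [exact Hinj | apply seq_NoDup]).
  assert (IN : incl l s).
  { intros f Hf. apply in_map_iff in Hf as [n [<- _]].
    destruct (Hs _ (He n)) as [g [Hg Eg]].
    replace (e n) with g by (fext; auto). exact Hg. }
  pose proof (NoDup_incl_length ND IN) as L. unfold l in L.
  rewrite length_map, length_seq in L. lia.
Qed.

Section GeneratedGroup.

Variable S : tfun -> Prop.

Lemma gen_ev l : Forall S l -> gen S (ev l).
Proof. induction 1; simpl; [apply gen_id | apply gen_mul; [apply gen_base|]; assumption]. Qed.

Lemma commutator_in_derived h1 h2 i1 i2 :
  gen S h1 -> gen S h2 -> is_inv h1 i1 -> is_inv h2 i2 ->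
  derived (gen S) (comp i1 (comp i2 (comp h1 h2))).
Proof. intros; apply gen_base; exists h1, h2, i1, i2; auto. Qed.

Lemma derived_sub : subset_of (derived (gen S)) (gen S).
Proof.
  intros c Hc; induction Hc as [c Hc| |f g _ IH1 _ IH2|f g _ IH Hfg|f g _ IH E].
  - destruct Hc as (h1 & h2 & i1 & i2 & H1 & H2 & J1 & J2 & ->).
    apply gen_mul; [exact (gen_inv _ _ _ H1 J1)|].
    apply gen_mul; [exact (gen_inv _ _ _ H2 J2)|].
    apply gen_mul; assumption.
  - apply gen_id.
  - apply gen_mul; assumption.
  - exact (gen_inv _ _ _ IH Hfg).
  - exact (gen_ext _ _ _ IH E).
Qed.

Lemma derived_normal : normal_in (derived (gen S)) (gen S).
Proof.
  intros h hi c Hh Hinv Hc.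
  assert (Hhi : gen S hi) by exact (gen_inv _ _ _ Hh Hinv).
  destruct Hinv as [I1 I2].
  assert (conj_is_inv : forall f g, is_inv f g -> is_inv (comp hi (comp f h)) (comp hi (comp g h))).
  { intros f g [F1 F2]; split; intros w; unfold comp; now rewrite I2, ?F1, ?F2, I1. }
  induction Hc as [c Hc| |f g _ IH1 _ IH2|f g _ IH Hfg|f g _ IH E].
  - destruct Hc as (h1 & h2 & i1 & i2 & H1 & H2 & J1 & J2 & ->).
    replace (comp hi (comp (comp i1 (comp i2 (comp h1 h2))) h))
      with (comp (comp hi (comp i1 h)) (comp (comp hi (comp i2 h))
              (comp (comp hi (comp h1 h)) (comp hi (comp h2 h)))))
      by (fext; unfold comp; now rewrite !I2).
    apply commutator_in_derived; try apply conj_is_inv; auto;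
      apply gen_mul; auto; apply gen_mul; auto.
  - replace (comp hi (comp idt h)) with idt by (fext; unfold comp, idt; auto).
    apply gen_id.
  - replace (comp hi (comp (comp f g) h)) with (comp (comp hi (comp f h)) (comp hi (comp g h)))
      by (fext; unfold comp; now rewrite I2).
    apply gen_mul; assumption.
  - exact (gen_inv _ _ _ IH (conj_is_inv _ _ Hfg)).
  - replace g with f by (fext; auto). exact IH.
Qed.

Hypothesis S_invol : forall s, S s -> involution s.

Lemma ev_revK l : Forall S l -> forall w, ev (rev l) (ev l w) = w.
Proof.
  induction 1 as [|f l Hf _ IH]; intros w; [reflexivity|].
  rewrite ev_rev_cons; simpl; unfold comp. now rewrite S_invol, IH.
Qed.

Lemma ev_Krev l : Forall S l -> forall w, ev l (ev (rev l) w) = w.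
Proof.
  induction 1 as [|f l Hf _ IH]; intros w; [reflexivity|].
  rewrite ev_rev_cons; simpl; unfold comp. now rewrite IH, S_invol.
Qed.

Lemma ev_is_inv l : Forall S l -> is_inv (ev l) (ev (rev l)).
Proof. intros F; split; [apply ev_revK | apply ev_Krev]; exact F. Qed.

Lemma gen_word h : gen S h -> exists l, Forall S l /\ h = ev l.
Proof.
  induction 1 as [f Hf| |f g _ [l1 [F1 ->]] _ [l2 [F2 ->]]|f g _ [l [F ->]] Hinv|f g _ [l [F ->]] E].
  - exists [f]; split; [constructor; auto | reflexivity].
  - exists []; split; [constructor | reflexivity].
  - exists (l1 ++ l2); split; [apply Forall_app; auto | now rewrite ev_app].
  - exists (rev l); split; [now apply Forall_rev|].
    exact (is_inv_unique _ _ _ Hinv (ev_is_inv l F)).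
  - exists l; split; [exact F | fext; auto].
Qed.

Section CommutatorClosure.

Variable N : tfun -> Prop.
Hypothesis N_id : N idt.
Hypothesis N_mul : forall f g, N f -> N g -> N (comp f g).
Hypothesis N_inv : forall f g, N f -> is_inv f g -> N g.
Hypothesis N_conj : forall s c, S s -> N c -> N (comp s (comp c s)).
Hypothesis N_comm : forall s t, S s -> S t -> N (comm s t).

Lemma N_conj_word l c : Forall S l -> N c -> N (comp (ev (rev l)) (comp c (ev l))).
Proof.
  intros F; revert c; induction F as [|s l Hs _ IH]; intros c Hc; [exact Hc|].
  rewrite ev_rev_cons. apply (IH (comp s (comp c s))), N_conj; assumption.
Qed.

(* [s, t u] = [s, u] . u^-1 [s, t] u *)
Lemma N_comm_gen_word s l : S s -> Forall S l -> N (comp s (comp (ev (rev l)) (comp s (ev l)))).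
Proof.
  intros Hs F; induction F as [|t l Ht Hl IH].
  - replace (comp s (comp (ev (rev [])) (comp s (ev [])))) with idt
      by (fext; symmetry; apply S_invol, Hs).
    exact N_id.
  - replace (comp s (comp (ev (rev (t :: l))) (comp s (ev (t :: l)))))
      with (comp (comp s (comp (ev (rev l)) (comp s (ev l))))
                 (comp (ev (rev l)) (comp (comm s t) (ev l)))).
    + apply N_mul; [exact IH|]. apply N_conj_word, N_comm; assumption.
    + rewrite ev_rev_cons. fext; simpl; unfold comm, comp.
      now rewrite ev_Krev, S_invol by assumption.
Qed.

(* [s x, z] = x^-1 [s, z] x . [x, z] *)
Lemma N_comm_words l1 l2 : Forall S l1 -> Forall S l2 ->
  N (comp (ev (rev l1)) (comp (ev (rev l2)) (comp (ev l1) (ev l2)))).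
Proof.
  intros F1 F2; induction F1 as [|s l Hs Hl IH].
  - replace (comp (ev (rev [])) (comp (ev (rev l2)) (comp (ev []) (ev l2)))) with idt
      by (fext; change (x = ev (rev l2) (ev l2 x)); symmetry; apply ev_revK, F2).
    exact N_id.
  - replace (comp (ev (rev (s :: l))) (comp (ev (rev l2)) (comp (ev (s :: l)) (ev l2))))
      with (comp (comp (ev (rev l)) (comp (comp s (comp (ev (rev l2)) (comp s (ev l2)))) (ev l)))
                 (comp (ev (rev l)) (comp (ev (rev l2)) (comp (ev l) (ev l2))))).
    + apply N_mul; [|exact IH]. apply N_conj_word, N_comm_gen_word; assumption.
    + rewrite ev_rev_cons. fext; simpl; unfold comp.
      now rewrite ev_Krev, ev_Krev by assumption.
Qed.

Lemma derived_in_closure c : derived (gen S) c -> N c.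
Proof.
  induction 1 as [c Hc| |f g _ IH1 _ IH2|f g _ IH Hfg|f g _ IH E].
  - destruct Hc as (h1 & h2 & i1 & i2 & H1 & H2 & J1 & J2 & ->).
    destruct (gen_word h1 H1) as [l1 [F1 ->]], (gen_word h2 H2) as [l2 [F2 ->]].
    rewrite (is_inv_unique _ _ _ J1 (ev_is_inv l1 F1)),
            (is_inv_unique _ _ _ J2 (ev_is_inv l2 F2)).
    apply N_comm_words; assumption.
  - exact N_id.
  - apply N_mul; assumption.
  - exact (N_inv _ _ IH Hfg).
  - replace g with f by (fext; auto). exact IH.
Qed.

End CommutatorClosure.

Fixpoint subproducts (L : list tfun) : list tfun :=
  match L with
  | [] => [idt]
  | s :: L' => subproducts L' ++ map (comp s) (subproducts L')
  end.

Lemma idt_in_subproducts L : In idt (subproducts L).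
Proof. induction L as [|s L IH]; simpl; [now left | apply in_or_app; now left]. Qed.

Lemma subproducts_gen L : (forall f, In f L -> S f) -> forall t, In t (subproducts L) -> gen S t.
Proof.
  induction L as [|s L IH]; intros HL t Ht; simpl in Ht.
  - destruct Ht as [<-|[]]. apply gen_id.
  - apply in_app_or in Ht as [Ht|Ht].
    + apply IH; [intros; apply HL; now right | exact Ht].
    + apply in_map_iff in Ht as [t' [<- Ht']].
      apply gen_mul; [apply gen_base, HL; now left|].
      apply IH; [intros; apply HL; now right | exact Ht'].
Qed.

Lemma subproducts_mul_l L : (forall f, In f L -> S f) -> forall g t, In g L -> In t (subproducts L) ->
  exists t' c, In t' (subproducts L) /\ derived (gen S) c /\ comp g t = comp t' c.
Proof.
  induction L as [|s L IH]; intros HL g t Hg Ht; [destruct Hg|].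
  assert (HL' : forall f, In f L -> S f) by (intros; apply HL; now right).
  assert (Hs : S s) by (apply HL; now left).
  simpl in Ht; apply in_app_or in Ht as [Ht0|Ht0]; destruct Hg as [<-|Hg].
  - exists (comp s t), idt; split; [apply in_or_app; right; now apply in_map|].
    split; [apply gen_id | reflexivity].
  - destruct (IH HL' g t Hg Ht0) as (t' & c & Ht' & Hc & E).
    exists t', c; split; [apply in_or_app; now left | auto].
  - apply in_map_iff in Ht0 as [t0 [<- Ht0]].
    exists t0, idt; split; [apply in_or_app; now left|].
    split; [apply gen_id | fext; unfold comp, idt; now apply S_invol].
  - (* g s t0 = s (g t0) (t0^-1 [g, s] t0) *)
    apply in_map_iff in Ht0 as [t0 [<- Ht0]].
    destruct (IH HL' g t0 Hg Ht0) as (t' & c & Ht' & Hc & E).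
    destruct (gen_word t0 (subproducts_gen L HL' t0 Ht0)) as [l0 [F0 ->]].
    assert (Hg' : S g) by now apply HL'.
    exists (comp s t'), (comp c (comp (ev (rev l0)) (comp (comm g s) (ev l0)))).
    split; [apply in_or_app; right; now apply in_map|]. split.
    + apply gen_mul; [exact Hc|].
      apply (derived_normal _ _ _ (gen_ev l0 F0) (ev_is_inv l0 F0)).
      apply commutator_in_derived; try apply gen_base; auto; apply involution_is_inv; auto.
    + fext. pose proof (equal_f E) as E'; unfold comp in E' |- *.
      unfold comm, comp. rewrite <- E', ev_Krev by assumption.
      now rewrite S_invol, S_invol by auto.
Qed.

Lemma word_subproducts_decomp L : (forall f, In f L -> S f) -> (forall f, S f -> In f L) ->
  forall l, Forall S l ->
  exists t c, In t (subproducts L) /\ derived (gen S) c /\ ev l = comp t c.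
Proof.
  intros HL HS; induction 1 as [|g l Hg _ (t & c & Ht & Hc & E)].
  - exists idt, idt; split; [apply idt_in_subproducts | split; [apply gen_id | reflexivity]].
  - destruct (subproducts_mul_l L HL g t (HS g Hg) Ht) as (t' & c' & Ht' & Hc' & E').
    exists t', (comp c' c); split; [exact Ht'|]. split; [apply gen_mul; assumption|].
    simpl; rewrite E. change (comp (comp g t) c = comp t' (comp c' c)). now rewrite E'.
Qed.

Lemma derived_finite_index L : (forall f, In f L -> S f) -> (forall f, S f -> In f L) ->
  finite_index (derived (gen S)) (gen S).
Proof.
  intros HL HS; exists (subproducts L); split; [exact (subproducts_gen L HL)|].
  intros h Hh. destruct (gen_word h Hh) as [l [F ->]].
  destruct (word_subproducts_decomp L HL HS l F) as (t & c & Ht & Hc & E).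
  exists t, c; split; [exact Ht | split; [exact Hc | now rewrite E]].
Qed.
End GeneratedGroup.

(* The element (t, a) of the wreath recursion. *)
Definition pairf (t a : tfun) : tfun := fun w =>
  match w with
  | [] => []
  | false :: v => false :: t v
  | true :: v => true :: a v
  end.

Lemma pairf_comp t1 a1 t2 a2 : comp (pairf t1 a1) (pairf t2 a2) = pairf (comp t1 t2) (comp a1 a2).
Proof. fext; destruct x as [|[|] v]; reflexivity. Qed.

Lemma pairf_idt : pairf idt idt = idt.
Proof. fext; destruct x as [|[|] v]; reflexivity. Qed.

Lemma pairf_is_inv t t' a a' : is_inv t t' -> is_inv a a' -> is_inv (pairf t a) (pairf t' a').
Proof.
  intros [T1 T2] [A1 A2]; split; intros [|[|] v]; simpl; now rewrite ?T1, ?T2, ?A1, ?A2.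
Qed.

Lemma delta_false_pairf c : delta false c = pairf c idt.
Proof. fext; destruct x as [|[|] v]; reflexivity. Qed.

Lemma delta_true_pairf c : delta true c = pairf idt c.
Proof. fext; destruct x as [|[|] v]; reflexivity. Qed.

Lemma r0_conj_pairf t a : comp (r 0) (comp (pairf t a) (r 0)) = pairf a t.
Proof. fext; destruct x as [|[|] v]; reflexivity. Qed.

Lemma r_S i : r (S i) = pairf (r i) idt.
Proof. fext; destruct x as [|[|] v]; reflexivity. Qed.

Lemma b_B0 k : b k B0 = pairf (r k) (b k B1).
Proof. fext; destruct x as [|[|] v]; reflexivity. Qed.

Lemma b_B1 k : b k B1 = pairf (r k) (b k B2).
Proof. fext; destruct x as [|[|] v]; reflexivity. Qed.

Lemma b_B2 k : b k B2 = pairf idt (b k B0).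
Proof. fext; destruct x as [|[|] v]; reflexivity. Qed.

Lemma r_involution i : involution (r i).
Proof. induction i; intros [|[|] v]; simpl; rewrite ?IHi; reflexivity. Qed.

Lemma b_involution k j : involution (b k j).
Proof.
  intros w; revert j; induction w as [|x v IH]; intros j; [now destruct j|].
  destruct j, x; simpl; now rewrite ?r_involution, ?IH.
Qed.

Lemma b_commute k j j' : comp (b k j) (b k j') = comp (b k j') (b k j).
Proof.
  fext; unfold comp; revert j j'; induction x as [|x v IH]; intros j j'; [now destruct j, j'|].
  destruct j, j', x; simpl; try reflexivity; f_equal; apply IH.
Qed.

Lemma gens_involution k f : gens k f -> involution f.
Proof. intros [[i [_ ->]] | [-> | [-> | ->]]]; auto using r_involution, b_involution. Qed.

Definition gens_list (k : nat) : list tfun := map r (seq 0 (S k)) ++ [b k B0; b k B1; b k B2].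

Lemma gens_list_gens k f : In f (gens_list k) -> gens k f.
Proof.
  unfold gens_list, gens; intros Hf; apply in_app_or in Hf as [Hf|Hf].
  - apply in_map_iff in Hf as [i [<- Hi]]; apply in_seq in Hi. left; exists i; split; [lia | reflexivity].
  - simpl in Hf; destruct Hf as [<-|[<-|[<-|[]]]]; auto.
Qed.

Lemma gens_in_list k f : gens k f -> In f (gens_list k).
Proof.
  unfold gens_list; intros [[i [Hi ->]] | [-> | [-> | ->]]]; apply in_or_app.
  - left; apply in_map, in_seq; lia.
  - right; simpl; auto.
  - right; simpl; auto.
  - right; simpl; auto.
Qed.

Section Branching.

Variable k : nat.
Hypothesis hk : 1 <= k.

Lemma r_in_H i : i <= k -> Hgrp k (r i).
Proof. intros Hi; apply gen_base; left; eauto. Qed.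

Lemma b_in_H j : Hgrp k (b k j).
Proof. apply gen_base; unfold gens; destruct j; auto. Qed.

Lemma r0_conj_in_H f : Hgrp k f -> Hgrp k (comp (r 0) (comp f (r 0))).
Proof. intros Hf; apply gen_mul; [|apply gen_mul; [exact Hf|]]; apply r_in_H; lia. Qed.

Lemma gens_lift s : gens k s -> exists a, involution a /\ Hgrp k (pairf s a).
Proof.
  intros [[i [Hi ->]] | [-> | [-> | ->]]].
  - destruct (Nat.eq_dec i k) as [->|Hne].
    + exists (b k B1); split; [apply b_involution | rewrite <- b_B0; apply b_in_H].
    + exists idt; split; [intros w; reflexivity | rewrite <- r_S; apply r_in_H; lia].
  - exists idt; split; [intros w; reflexivity|].
    rewrite <- (r0_conj_pairf idt), <- b_B2. apply r0_conj_in_H, b_in_H.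
  - exists (r k); split; [apply r_involution|].
    rewrite <- (r0_conj_pairf (r k)), <- b_B0. apply r0_conj_in_H, b_in_H.
  - exists (r k); split; [apply r_involution|].
    rewrite <- (r0_conj_pairf (r k)), <- b_B1. apply r0_conj_in_H, b_in_H.
Qed.

Lemma gens_cases s : gens k s ->
  Hgrp k (pairf s idt) \/ s = r k \/ s = b k B1 \/ s = b k B2.
Proof.
  intros [[i [Hi ->]] | [-> | [-> | ->]]]; auto.
  - destruct (Nat.eq_dec i k) as [->|Hne]; [now right; left|].
    left; rewrite <- r_S; apply r_in_H; lia.
  - left; rewrite <- (r0_conj_pairf idt), <- b_B2. apply r0_conj_in_H, b_in_H.
Qed.

Definition delta0_in_derived (c : tfun) : Prop := derived (Hgrp k) (delta false c).

Lemma delta0_in_derived_conj s c :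
  gens k s -> delta0_in_derived c -> delta0_in_derived (comp s (comp c s)).
Proof.
  intros Hs Hc; destruct (gens_lift s Hs) as [a [Ha HL]].
  unfold delta0_in_derived in *; rewrite delta_false_pairf in *.
  replace (pairf (comp s (comp c s)) idt) with (comp (pairf s a) (comp (pairf c idt) (pairf s a)))
    by (rewrite !pairf_comp; f_equal; fext; apply Ha).
  apply (derived_normal (gens k)); auto.
  apply pairf_is_inv; apply involution_is_inv; [apply (gens_involution k)|]; assumption.
Qed.

Lemma delta0_in_derived_comm_lift s t : Hgrp k (pairf s idt) -> involution s -> gens k t ->
  delta0_in_derived (comm s t).
Proof.
  intros HL Hs Ht; destruct (gens_lift t Ht) as [a [Ha HLt]].
  unfold delta0_in_derived; rewrite delta_false_pairf.
  replace (pairf (comm s t) idt) with (comm (pairf s idt) (pairf t a))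
    by (unfold comm; rewrite !pairf_comp; f_equal; fext; apply Ha).
  apply commutator_in_derived; [exact HL | exact HLt | |]; apply pairf_is_inv;
    apply involution_is_inv; first [exact Hs | exact Ha | exact (gens_involution k t Ht) | intros w; reflexivity].
Qed.

Lemma delta0_in_derived_comm_sym s t : involution s -> involution t ->
  delta0_in_derived (comm s t) -> delta0_in_derived (comm t s).
Proof.
  unfold delta0_in_derived; rewrite !delta_false_pairf; intros Hs Ht Hst.
  apply (gen_inv _ _ _ Hst), pairf_is_inv; [apply comm_is_inv; assumption|].
  split; intros w; reflexivity.
Qed.

Lemma delta0_in_derived_idt : delta0_in_derived idt.
Proof. unfold delta0_in_derived; rewrite delta_false_pairf, pairf_idt; apply gen_id. Qed.

Lemma r_b2_commute : comp (r k) (b k B2) = comp (b k B2) (r k).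
Proof.
  destruct k as [|k']; [lia|]. rewrite r_S, b_B2, !pairf_comp. reflexivity.
Qed.

(* both sides are ([r_(k-1), r_k], id) *)
Lemma comm_r_b1 : comm (r k) (b k B1) = comm (r k) (b k B0).
Proof.
  destruct k as [|k']; [lia|].
  fext; destruct x as [|[|] v]; unfold comm, comp; simpl; now rewrite ?b_involution.
Qed.

Lemma delta0_in_derived_comm_gens s t : gens k s -> gens k t -> delta0_in_derived (comm s t).
Proof.
  intros Hs Ht.
  assert (commuting : forall f g, comp f g = comp g f -> involution f -> involution g ->
            delta0_in_derived (comm f g))
    by (intros; rewrite comm_commuting by assumption; apply delta0_in_derived_idt).
  assert (b0_lift : Hgrp k (pairf (b k B0) idt))
    by (rewrite <- (r0_conj_pairf idt), <- b_B2; apply r0_conj_in_H, b_in_H).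
  assert (rk_b1 : delta0_in_derived (comm (r k) (b k B1))).
  { rewrite comm_r_b1; apply delta0_in_derived_comm_sym; [apply b_involution | apply r_involution|].
    apply delta0_in_derived_comm_lift; [exact b0_lift | apply b_involution | left; eauto]. }
  pose proof (gens_involution k s Hs) as Is; pose proof (gens_involution k t Ht) as It.
  destruct (gens_cases s Hs) as [Ls | Es]; [now apply delta0_in_derived_comm_lift|].
  destruct (gens_cases t Ht) as [Lt | Et].
  { now apply delta0_in_derived_comm_sym, delta0_in_derived_comm_lift. }
  destruct Es as [-> | [-> | ->]], Et as [-> | [-> | ->]];
    try (apply commuting; auto using b_commute, r_b2_commute, eq_sym; fail).
  - exact rk_b1.
  - now apply delta0_in_derived_comm_sym.
Qed.

Lemma derived_delta0_in_derived c : derived (Hgrp k) c -> delta0_in_derived c.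
Proof.
  apply (derived_in_closure (gens k) (gens_involution k)).
  - exact delta0_in_derived_idt.
  - unfold delta0_in_derived; intros f g; rewrite !delta_false_pairf.
    replace (pairf (comp f g) idt) with (comp (pairf f idt) (pairf g idt))
      by (rewrite pairf_comp; reflexivity).
    apply gen_mul.
  - unfold delta0_in_derived; intros f g; rewrite !delta_false_pairf; intros Hf Hfg.
    apply (gen_inv _ _ _ Hf), pairf_is_inv; [exact Hfg | split; intros w; reflexivity].
  - exact delta0_in_derived_conj.
  - exact delta0_in_derived_comm_gens.
Qed.

Lemma derived_delta_closed c x : derived (Hgrp k) c -> derived (Hgrp k) (delta x c).
Proof.
  intros Hc; pose proof (derived_delta0_in_derived c Hc) as H0.
  destruct x; [|exact H0].
  unfold delta0_in_derived in H0; rewrite delta_false_pairf in H0.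
  rewrite delta_true_pairf, <- r0_conj_pairf.
  apply derived_normal; [apply r_in_H; lia | apply involution_is_inv, r_involution | exact H0].
Qed.

Definition branch_witness (n : nat) : tfun :=
  Nat.iter n (delta false) (delta true (comm (r 0) (r 1))).

Lemma branch_witness_in_derived n : derived (Hgrp k) (branch_witness n).
Proof.
  induction n as [|n IH]; [|exact (derived_delta_closed _ false IH)].
  apply (derived_delta_closed _ true).
  apply commutator_in_derived; try (apply r_in_H; lia); apply involution_is_inv, r_involution.
Qed.

End Branching.

Lemma branch_witness_on_spine n w :
  branch_witness n (repeat false n ++ w) = repeat false n ++ delta true (comm (r 0) (r 1)) w.
Proof. induction n as [|n IH]; simpl; [reflexivity | now rewrite IH]. Qed.

Lemma branch_witness_off_spine n m v : n < m ->
  branch_witness m (repeat false n ++ true :: v) = repeat false n ++ true :: v.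
Proof.
  revert m; induction n as [|n IH]; intros [|m] Hm; simpl; try lia; [reflexivity|].
  now rewrite IH by lia.
Qed.

Lemma branch_witness_injective : Injective branch_witness.
Proof.
  assert (lt_neq : forall n m, n < m -> branch_witness n <> branch_witness m).
  { intros n m Hnm E.
    pose proof (branch_witness_on_spine n [true; false; false]) as V.
    rewrite E, branch_witness_off_spine in V by exact Hnm.
    apply app_inv_head in V. discriminate. }
  intros n m E; destruct (Nat.lt_total n m) as [H|[H|H]]; auto.
  - exfalso; exact (lt_neq _ _ H E).
  - exfalso; exact (lt_neq _ _ H (eq_sym E)).
Qed.

Theorem mainTheorem17 (k : nat) (hk : 1 <= k) :
  regular_branch_over (Hgrp k) (derived (Hgrp k)).
Proof.
  split; [|split; [|split; [|split]]].
  - apply (infinite_of_injective _ branch_witness); [|exact branch_witness_injective].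
    intros n; apply derived_sub, branch_witness_in_derived, hk.
  - apply derived_sub.
  - apply derived_normal.
  - apply (derived_finite_index _ (gens_involution k) (gens_list k));
      [apply gens_list_gens | apply gens_in_list].
  - intros c x; apply derived_delta_closed, hk.
Qed.
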